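(* Let $K$ be a non-commutative division ring, let $R:=K[X,Y]$ be the polynomial ring over $K$ in two independent central indeterminates $X,Y$, and let $a,b\in K$ with $ab-ba\neq 0$. Then the pair $(X+a,-(Y+b))\in R^2$ is unimodular (there exist $x',y'\in R$ with $(X+a)x'-(Y+b)y'=1$) but not admissible (it is not the first row of any invertible $2\times2$ matrix over $R$).
   Context: A pair $(x,y)\in R^2$ is unimodular if $xx'+yy'=1$ for some $x',y'\in R$, and admissible if it is the first row of some invertible $2\times 2$ matrix over $R$. *)

From HB Require Import structures.
From mathcomp Require Import all_boot all_order all_algebra.
Set Implicit Arguments. Unset Strict Implicit. Unset Printing Implicit Defensive.
Import Order.TTheory GRing.Theory Num.Theory.
Local Open Scope ring_scope.

Definition division_ring (K : unitRingType) : Prop :=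
  forall x : K, x != 0 -> x \is a GRing.unit.

(* K[X,Y] is modelled as {poly {poly K}}: Y is the outer variable 'X,
   X is the inner variable 'X%:P; both are central. *)
Definition varX {K : nzRingType} : {poly {poly K}} := ('X)%:P.
Definition varY {K : nzRingType} : {poly {poly K}} := 'X.
Definition cst2 {K : nzRingType} (a : K) : {poly {poly K}} := (a%:P)%:P.

Definition unimodular (R : nzRingType) (x y : R) : Prop :=
  exists x' y' : R, x * x' + y * y' = 1.

Definition invertible_mx2 (R : nzRingType) (M : 'M[R]_2) : Prop :=
  exists N : 'M[R]_2, M *m N = 1%:M /\ N *m M = 1%:M.

Definition admissible (R : nzRingType) (x y : R) : Prop :=
  exists M : 'M[R]_2, [/\ M 0 0 = x, M 0 1 = y & invertible_mx2 M].

From HB Require Import structures.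
From mathcomp Require Import all_boot all_order all_algebra.
From mathcomp Require Import zify.
Import GRing.Theory.
Local Open Scope ring_scope.

(* Unimodularity: since X, Y are central, (X+a)(Y+b) - (Y+b)(X+a) = c, so
   x * ((Y+b) c^-1) + y * ((X+a) c^-1) = 1.
   Non-admissibility: if (x, y) is the first row of an invertible matrix M with
   inverse N, then the right kernel {(f,g) | x f + y g = 0} is generated by the
   second column (q, s) of N, which has the left inverse (M 1 0, M 1 1); in
   particular (q, s) is nonzero.  Unimodularity produces two explicit kernel
   elements; as R has no zero divisors, degrees add under multiplication, and
   these two elements force (q, s) to have degree at most 1 in Y and at most 1
   in X (the X-degree is read off after exchanging X and Y with swapXY).
   A comparison of coefficients then shows that the only kernel element of
   bidegree at most (1,1) is zero, because c is invertible. *)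

Definition no_zero_divisors (R : nzRingType) : Prop :=
  forall x y : R, x != 0 -> y != 0 -> x * y != 0.

Lemma division_ring_no_zero_divisors {K : unitRingType} :
  division_ring K -> no_zero_divisors K.
Proof.
move=> hK x y /hK ux; apply: contra => /eqP xy0.
by rewrite -(mulKr ux y) xy0 mulr0.
Qed.

Lemma poly_no_zero_divisors {R : nzRingType} :
  no_zero_divisors R -> no_zero_divisors {poly R}.
Proof.
move=> hR p q p0 q0.
have lpq : lead_coef p * lead_coef q != 0 by apply: hR; rewrite lead_coef_eq0.
by rewrite -lead_coef_eq0 lead_coef_proper_mul.
Qed.

Lemma size_mul_ge {R : nzRingType} {p t : {poly R}} :
  no_zero_divisors R -> t != 0 -> (size p <= size (p * t)%R)%N.
Proof.
move=> hR t0; have [->|p0] := eqVneq p 0; first by rewrite size_poly0.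
rewrite size_proper_mul; last by apply: hR; rewrite lead_coef_eq0.
by move: t0; rewrite -size_poly_gt0; lia.
Qed.

Lemma factor_size_bound {R : nzRingType} {f g q s t : {poly R}} {m : nat} :
  no_zero_divisors R -> f = q * t -> g = s * t -> f != 0 ->
  (size f <= m)%N -> (size g <= m)%N -> (size q <= m)%N /\ (size s <= m)%N.
Proof.
move=> hR ef eg f0 hf hg.
have t0 : t != 0 by apply: contra f0 => /eqP t0; rewrite ef t0 mulr0.
by split; [rewrite ef in hf | rewrite eg in hg];
  apply: leq_trans (size_mul_ge hR t0) _.
Qed.

Lemma size_mul_le_const {R : nzRingType} {p r : {poly R}} {m : nat} :
  (size p <= m)%N -> (size r <= 1)%N -> (size (p * r)%R <= m)%N.
Proof. by move=> hp hr; have := size_polyMleq p r; lia. Qed.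

Lemma size_one_sub_le2 {R : nzRingType} {p : {poly R}} :
  (size p <= 2)%N -> (size (1 - p)%R <= 2)%N.
Proof.
move=> hp; apply: leq_trans (size_polyD _ _) _.
by rewrite size_polyN size_poly1 geq_max hp.
Qed.

Lemma mulmx2E {R : nzRingType} (A B : 'M[R]_2) i j :
  (A *m B) i j = A i 0 * B 0 j + A i 1 * B 1 j.
Proof.
rewrite mxE big_ord_recl big_ord1.
by congr (_ + _ * _); [congr (A i _) | congr (B _ j)]; apply: val_inj.
Qed.

Lemma unimodular_kernel {R : nzRingType} {x y x' y' : R} : x * x' + y * y' = 1 ->
  x * (1 - x' * x) + y * (- (y' * x)) = 0 /\
  x * (- (x' * y)) + y * (1 - y' * y) = 0.
Proof.
move=> hu; split.
  by rewrite mulrBr mulr1 mulrN !mulrA -addrA -opprD -mulrDl hu mul1r subrr.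
by rewrite mulrN mulrBr mulr1 !mulrA addrCA -opprD -mulrDl hu mul1r subrr.
Qed.

Definition generates_kernel {R : nzRingType} (x y q s z w : R) : Prop :=
  forall f g, x * f + y * g = 0 ->
    f = q * (z * f + w * g) /\ g = s * (z * f + w * g).

(* Over any ring, the right kernel of an admissible row is generated by a
   kernel element (q, s) admitting a left inverse (z, w): take for (q, s) the
   second column of the inverse matrix and for (z, w) the second row of the
   matrix itself; the identity N M = 1 gives the generation property. *)
Lemma admissible_kernel_cyclic {R : nzRingType} (x y : R) : admissible x y ->
  exists q s z w : R,
    [/\ x * q + y * s = 0, z * q + w * s = 1 & generates_kernel x y q s z w].
Proof.
case=> M [<- <- [N [MN NM]]].
have entry (A B : 'M[R]_2) i j : A = B -> A i j = B i j by move->.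
move: (entry _ _ 0 1 MN) (entry _ _ 1 1 MN); rewrite !mulmx2E !mxE /= => e01 e11.
move: (entry _ _ 0 0 NM) (entry _ _ 0 1 NM) (entry _ _ 1 0 NM) (entry _ _ 1 1 NM).
rewrite !mulmx2E !mxE /= => f00 f01 f10 f11.
exists (N 0 1), (N 1 1), (M 1 0), (M 1 1); split=> // f g hfg.
split.
  transitivity ((N 0 0 * M 0 0 + N 0 1 * M 1 0) * f +
                (N 0 0 * M 0 1 + N 0 1 * M 1 1) * g).
    by rewrite f00 f01 mul1r mul0r addr0.
  by rewrite !mulrDl -!mulrA addrACA -!mulrDr hfg mulr0 add0r.
transitivity ((N 1 0 * M 0 0 + N 1 1 * M 1 0) * f +
              (N 1 0 * M 0 1 + N 1 1 * M 1 1) * g).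
  by rewrite f10 f11 mul1r mul0r add0r.
by rewrite !mulrDl -!mulrA addrACA -!mulrDr hfg mulr0 add0r.
Qed.

Section Bivariate.
Variable K : nzRingType.
Implicit Types (a b d e : K) (p : {poly {poly K}}).

Lemma varX_cst2E d : varX + cst2 d = ('X + d%:P)%:P :> {poly {poly K}}.
Proof. by rewrite /varX /cst2 polyCD. Qed.

Lemma commutator_XY a b :
  (varX + cst2 a) * (varY + cst2 b) - (varY + cst2 b) * (varX + cst2 a)
  = cst2 (a * b - b * a) :> {poly {poly K}}.
Proof.
rewrite varX_cst2E /varY /cst2 !mulrDr !mulrDl (commr_polyX ('X + a%:P)%:P).
rewrite opprD addrACA subrr add0r -!polyCM -polyCB mulrDl mulrDr.
by rewrite (commr_polyX b%:P) opprD addrACA subrr add0r -!polyCM -polyCB.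
Qed.

Lemma swapXY_varX_cst2 d :
  swapXY (varX + cst2 d) = varY + cst2 d :> {poly {poly K}}.
Proof. by rewrite raddfD /= /varX /varY /cst2 !swapXY_polyC map_polyX map_polyC. Qed.

Lemma swapXY_varY_cst2 d :
  swapXY (varY + cst2 d) = varX + cst2 d :> {poly {poly K}}.
Proof. by rewrite raddfD /= /varX /varY /cst2 swapXY_X swapXY_polyC map_polyC. Qed.

Lemma swapXY_cst2 d : swapXY (cst2 d) = cst2 d :> {poly {poly K}}.
Proof. by rewrite /cst2 swapXY_polyC map_polyC. Qed.

Lemma size_varX_cst2 d : (size ((varX + cst2 d)%R : {poly {poly K}}) <= 1)%N.
Proof. by rewrite varX_cst2E size_polyC_leq1. Qed.

Lemma size_varY_cst2 d : (size ((varY + cst2 d)%R : {poly {poly K}}) <= 2)%N.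
Proof. by rewrite /varY /cst2 size_XaddC. Qed.

Lemma cst2M d e : cst2 (d * e) = cst2 d * cst2 e :> {poly {poly K}}.
Proof. by rewrite /cst2 !polyCM. Qed.

Lemma size_XCX d e d' :
  (size ((varX + cst2 d) * cst2 e * (varX + cst2 d') : {poly {poly K}})%R <= 1)%N.
Proof. by rewrite !varX_cst2E /cst2 -!polyCM size_polyC_leq1. Qed.

Lemma coef_kernel_form a b p r i j :
  (((varX + cst2 a) * p + (- (varY + cst2 b)) * r)`_i)`_j =
  (if j is j'.+1 then p`_i`_j' else 0) + a * p`_i`_j
  - ((if i is i'.+1 then r`_i'`_j else 0) + b * r`_i`_j).
Proof.
rewrite mulNr !mulrDl !coefD !coefN /varX /varY /cst2 !coefCM coefXM.
rewrite !coefD ?coefN coefXM !coefCM.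
by case: i => [|i]; case: j => [|j]; rewrite /= ?coef0 ?add0r.
Qed.

Lemma coef_bidegree_le1 p i j :
  (size p <= 2)%N -> (size (swapXY p) <= 2)%N -> (1 < i)%N || (1 < j)%N ->
  p`_i`_j = 0.
Proof.
move=> hp hp' /orP[hi | hj].
  by rewrite [p`_i]nth_default ?coef0 //; apply: leq_trans hp hi.
by rewrite -coef_swapXY [_`_j]nth_default ?coef0 //; apply: leq_trans hp' hj.
Qed.

Lemma bidegree_le1_eq0 p :
  (size p <= 2)%N -> (size (swapXY p) <= 2)%N ->
  p`_0`_0 = 0 -> p`_0`_1 = 0 -> p`_1`_0 = 0 -> p`_1`_1 = 0 -> p = 0.
Proof.
move=> hp hp' p00 p01 p10 p11; apply/polyP => i; apply/polyP => j.
rewrite !coef0; case: i j => [|[|i]] [|[|j]] //; exact: coef_bidegree_le1.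
Qed.

End Bivariate.

Section Counterexample.
Variable K : unitRingType.
Hypothesis hK : division_ring K.
Variables a b : K.
Hypothesis hab : a * b - b * a != 0.

Local Notation P := {poly {poly (K : nzRingType)}}.
Local Notation x := (varX + cst2 a : P).
Local Notation yb := (varY + cst2 b : P).
Local Notation C := (cst2 (a * b - b * a)^-1 : P).

Lemma unimodular_witness : x * (yb * C) + (- yb) * (x * C) = 1.
Proof.
by rewrite !mulrA !mulNr -mulrBl commutator_XY -cst2M mulrV ?hK.
Qed.

Lemma polyK_no_zero_divisors : no_zero_divisors {poly K}.
Proof. exact: poly_no_zero_divisors (division_ring_no_zero_divisors hK). Qed.

Lemma XCX_neq0 d : (varX + cst2 d) * C * (varX + cst2 d) != 0 :> P.
Proof.
have nzP := polyK_no_zero_divisors.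
have nzX : 'X + d%:P != 0 by rewrite -size_poly_eq0 size_XaddC.
rewrite varX_cst2E /cst2 -!polyCM polyC_eq0.
apply: (nzP _ _ _ nzX); apply: (nzP _ _ nzX); by rewrite polyC_eq0 invr_eq0.
Qed.

(* The only kernel element of bidegree at most (1,1) is zero: comparing
   coefficients forces q = (Y + b) u and s = (X + a) u with c u = 0. *)
Lemma kernel_bidegree_le1 {q s : P} : x * q + (- yb) * s = 0 ->
  (size q <= 2)%N -> (size s <= 2)%N ->
  (size (swapXY q) <= 2)%N -> (size (swapXY s) <= 2)%N -> q = 0 /\ s = 0.
Proof.
move=> E hq hs hq' hs'.
have e i j : (if j is j'.+1 then q`_i`_j' else 0) + a * q`_i`_j
    - ((if i is i'.+1 then s`_i'`_j else 0) + b * s`_i`_j) = 0.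
  by rewrite -coef_kernel_form E !coef0.
have vq i j := @coef_bidegree_le1 _ q i j hq hq'.
have vs i j := @coef_bidegree_le1 _ s i j hs hs'.
have [q02 q12 q20 q21] : [/\ q`_0`_2 = 0, q`_1`_2 = 0, q`_2`_0 = 0 & q`_2`_1 = 0].
  by split; apply: vq.
have [s02 s12 s20 s21] : [/\ s`_0`_2 = 0, s`_1`_2 = 0, s`_2`_0 = 0 & s`_2`_1 = 0].
  by split; apply: vs.
have := e 0%N 2%N; have := e 1%N 2%N; have := e 2%N 0%N; have := e 2%N 1%N.
rewrite /= q02 q12 q20 q21 s02 s12 s20 s21 ?mulr0 ?addr0 ?add0r ?subr0 ?sub0r.
move=> /eqP; rewrite oppr_eq0 => /eqP s11 /eqP; rewrite oppr_eq0 => /eqP s10 q11 q01.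
have := e 0%N 0%N; have := e 0%N 1%N; have := e 1%N 0%N; have := e 1%N 1%N.
rewrite /= q01 q11 s10 s11 ?mulr0 ?addr0 ?add0r.
move=> /subr0_eq q10 /subr0_eq s00 /subr0_eq q00 /subr0_eq.
rewrite q00 -s00 q10 !mulrA => /eqP; rewrite -subr_eq0 -mulrBl => /eqP c0.
have s01 : s`_0`_1 = 0 by rewrite -(mulKr (hK _ hab) (s`_0`_1)) c0 mulr0.
rewrite s01 in q10; rewrite s01 mulr0 in q00; rewrite q10 mulr0 in s00.
by split; [apply: bidegree_le1_eq0 hq hq' q00 q01 q10 q11 |
           apply: bidegree_le1_eq0 hs hs' (esym s00) s01 s10 s11].
Qed.

(* A kernel generator has degree at most 1 in Y: the kernel element
   (1 - (Y+b) c^-1 (X+a), -(X+a) c^-1 (X+a)) of the unimodular witness has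
   Y-degree at most 1 and a nonzero second component. *)
Lemma generator_sizeY {q s z w : P} : generates_kernel x (- yb) q s z w ->
  (size q <= 2)%N /\ (size s <= 2)%N.
Proof.
move=> gen; have [k1 _] := unimodular_kernel unimodular_witness.
have [ef eg] := gen _ _ k1.
suff [hs hq] : (size s <= 2)%N /\ (size q <= 2)%N by [].
apply: factor_size_bound polyK_no_zero_divisors eg ef _ _ _.
- by rewrite oppr_eq0 XCX_neq0.
- by rewrite size_polyN; apply: leq_trans (size_XCX _ _ _ _) _.
apply: size_one_sub_le2; apply: size_mul_le_const (size_varX_cst2 _ _).
exact: size_mul_le_const (size_varY_cst2 _ _) (size_polyC_leq1 _).
Qed.

(* Symmetrically, a kernel generator has degree at most 1 in X: after
   exchanging X and Y, the kernel element (-(Y+b) c^-1 (-(Y+b)),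
   1 - (X+a) c^-1 (-(Y+b))) has a nonzero first component not involving Y and
   a second component of Y-degree at most 1. *)
Lemma generator_sizeX {q s z w : P} : generates_kernel x (- yb) q s z w ->
  (size (swapXY q) <= 2)%N /\ (size (swapXY s) <= 2)%N.
Proof.
move=> gen; have [_ k2] := unimodular_kernel unimodular_witness.
have [ef eg] := gen _ _ k2.
move: ef eg; rewrite mulrN opprK => /(congr1 swapXY) ef /(congr1 swapXY) eg.
rewrite !rmorphM /= swapXY_varY_cst2 swapXY_cst2 in ef.
rewrite raddfB /= rmorph1 !rmorphM /= raddfN /= in eg.
rewrite swapXY_varX_cst2 swapXY_varY_cst2 swapXY_cst2 in eg.
apply: factor_size_bound polyK_no_zero_divisors ef eg (XCX_neq0 _) _ _.
  exact: leq_trans (size_XCX _ _ _ _) _.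
apply: size_one_sub_le2; apply: size_mul_le_const.
  exact: size_mul_le_const (size_varY_cst2 _ _) (size_polyC_leq1 _).
by rewrite size_polyN size_varX_cst2.
Qed.

Lemma not_admissible : ~ admissible x (- yb).
Proof.
case/admissible_kernel_cyclic => q [s [z [w [kqs zqws gen]]]].
have [hq hs] := generator_sizeY gen; have [hq' hs'] := generator_sizeX gen.
have [q0 s0] := kernel_bidegree_le1 kqs hq hs hq' hs'.
by move: zqws; rewrite q0 s0 !mulr0 addr0 => /eqP; rewrite eq_sym oner_eq0.
Qed.

End Counterexample.

Theorem mainTheorem7 (K : unitRingType) (hK : division_ring K)
  (hnc : exists u v : K, u * v != v * u)
  (a b : K) (hab : a * b - b * a != 0) :
  unimodular (varX + cst2 a) (- (varY + cst2 b)) /\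
  ~ admissible (varX + cst2 a) (- (varY + cst2 b)).
Proof.
split; last exact: not_admissible _ hK _ _ hab.
exists ((varY + cst2 b) * cst2 (a * b - b * a)^-1).
exists ((varX + cst2 a) * cst2 (a * b - b * a)^-1).
exact: unimodular_witness _ hK _ _ hab.
Qed.
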